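(* Let $\delta$ be a classifier and $t\ge 0$. If $\delta$ is not null, then for each $\beta\in\{0,1\}$ the conditional payoff $V_\beta(r)$ is strictly quasiconcave in $r\in\mathbb{R}$ and attains its maximum at some (finite) $r\in\mathbb{R}$. If $\delta$ is null, every individual is indifferent among all reward levels $r$.
   Context: Individuals have privately known costs $\gamma_i\in\mathbb{R}$ of choosing $\beta_i=1$ (compliance) rather than $\beta_i=0$, distributed according to a continuously differentiable CDF $F$ with log-concave density $f$ of full support on $\mathbb{R}$. A classifier $\delta=(\delta_1,\delta_0)\in[0,1]^2$ assigns $d_i\in\{0,1\}$ with $\Pr[d_i=s_i\mid s_i]=\delta_{s_i}$, where the signal satisfies $\Pr[s_i=\beta_i]=\phi\in(\tfrac12,1]$. Let $\rho=\rho(\delta,\phi)=(\delta_1+\delta_0-1)(2\phi-1)$; $\delta$ is null if $\rho=0$. Individuals with $d_i=1$ receive reward $r$, rewards are financed by an equal tax on everyone (budget balance), and each individual additionally gets $t\cdot\pi$ where $\pi$ is the population compliance rate; individuals comply iff $\gamma_i\le r\rho$, so $\pi=F(r\rho)$. Individual $i$'s expected payoff from reward $r$, conditional on complying, is $V_1(r)=-\gamma_i+r\rho(1-F(r\rho))+tF(r\rho)$, and conditional on not complying is $V_0(r)=-r\rho F(r\rho)+tF(r\rho)$; an individual's payoff from $r$ is $V_1(r)$ if $\gamma_i\le r\rho$ and $V_0(r)$ otherwise. *)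

From Stdlib Require Import Reals.
From Coquelicot Require Import Coquelicot.
Open Scope R_scope.

Definition is_C1_cdf_with_density (F f : R -> R) : Prop :=
  (forall x, is_derive F x (f x)) /\
  (forall x, continuous f x) /\
  is_lim F m_infty 0 /\
  is_lim F p_infty 1.

Definition full_support (f : R -> R) : Prop := forall x, 0 < f x.

(* log-concavity: ln o f is concave (f is positive under full support) *)
Definition log_concave (f : R -> R) : Prop :=
  forall x y l, 0 <= l <= 1 ->
    l * ln (f x) + (1 - l) * ln (f y) <= ln (f (l * x + (1 - l) * y)).

Definition rho (d1 d0 phi : R) : R := (d1 + d0 - 1) * (2 * phi - 1).

Definition is_null (d1 d0 phi : R) : Prop := rho d1 d0 phi = 0.

Definition V1 (F : R -> R) (rh t gamma : R) (r : R) : R :=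
  - gamma + r * rh * (1 - F (r * rh)) + t * F (r * rh).

Definition V0 (F : R -> R) (rh t : R) (r : R) : R :=
  - (r * rh * F (r * rh)) + t * F (r * rh).

Definition Vbeta (F : R -> R) (rh t gamma : R) (beta : bool) (r : R) : R :=
  if beta then V1 F rh t gamma r else V0 F rh t r.

(* the individual's actual payoff: complies iff gamma <= r rho *)
Definition payoff (F : R -> R) (rh t gamma : R) (r : R) : R :=
  if Rle_dec gamma (r * rh) then V1 F rh t gamma r else V0 F rh t r.

Definition strictly_quasiconcave (g : R -> R) : Prop :=
  forall x y l, x <> y -> 0 < l < 1 ->
    Rmin (g x) (g y) < g (l * x + (1 - l) * y).

Definition attains_max (g : R -> R) : Prop :=
  exists r, forall r', g r' <= g r.

From Stdlib Require Import Reals Lra FunctionalExtensionality.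
From Coquelicot Require Import Coquelicot.
Open Scope R_scope.

(* Writing s = r * rho, the complier's payoff is G(s) = -gamma + s (1 - F s) + t F s,
   whose derivative is f(s) (m(s) - (s - t)) with m = (1 - F)/f the Mills ratio.
   Log-concavity of f makes the survival function 1 - F log-concave, i.e. m is
   nonincreasing, so the bracket is strictly decreasing and changes sign exactly once:
   G increases and then decreases, hence is strictly quasiconcave with a maximum, and
   so is its composition with the nonzero scaling r |-> r * rho.  The non-complier's
   payoff is the complier's payoff for the mirrored distribution 1 - F(-x) (with rho,
   t and gamma replaced by -rho, -t and -t), and mirroring preserves every hypothesis
   on F. *)

Lemma is_lim_comp_shift (g : R -> R) (c : R) (x l : Rbar) :
  is_lim g (Rbar_plus x c) l -> is_lim (fun z => g (z + c)) x l.
Proof.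
  intro Hg; apply (is_lim_comp g (fun z => z + c) x l (Rbar_plus x c) Hg).
  - eapply is_lim_plus; [apply is_lim_id | apply is_lim_const |].
    destruct x; reflexivity.
  - destruct x as [x| |]; simpl.
    + exists (mkposreal 1 Rlt_0_1); intros y _ Hyx E; apply Hyx.
      injection E; lra.
    + exists 0; intros z _; discriminate.
    + exists 0; intros z _; discriminate.
Qed.

Lemma is_lim_comp_opp (g : R -> R) (x l : Rbar) :
  is_lim g (Rbar_opp x) l -> is_lim (fun z => g (- z)) x l.
Proof.
  intro Hg; apply (is_lim_comp g (fun z => - z) x l (Rbar_opp x) Hg).
  - apply (is_lim_opp (fun z => z)), is_lim_id.
  - destruct x as [x| |]; simpl.
    + exists (mkposreal 1 Rlt_0_1); intros y _ Hyx E; apply Hyx.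
      injection E; lra.
    + exists 0; intros z _; discriminate.
    + exists 0; intros z _; discriminate.
Qed.

Lemma nonneg_of_nonincreasing_lim0 (g g' : R -> R) (x : R) :
  (forall z, is_derive g z (g' z)) ->
  (forall z, x <= z -> g' z <= 0) ->
  is_lim g p_infty 0 ->
  0 <= g x.
Proof.
  intros Hd Hneg Hlim.
  assert (Hle : forall z, x <= z -> g z <= g x).
  { intros z [Hxz | <-]; [|lra].
    destruct (MVT_cor2 g g' x z Hxz) as [c [Hc Hcxz]].
    - intros c _; apply is_derive_Reals, Hd.
    - pose proof (Hneg c ltac:(lra)); nra. }
  apply (is_lim_le_loc g (fun _ => g x) p_infty 0 (g x)); [|exact Hlim|apply is_lim_const].
  exists x; intros z Hz; apply Hle; lra.
Qed.

Lemma log_concave_shift_ratio (f : R -> R) :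
  full_support f -> log_concave f ->
  forall z x d, z <= x -> 0 < d -> f z * f (x + d) <= f x * f (z + d).
Proof.
  intros Hs Hlc z x d Hzx Hd.
  set (l := d / (x + d - z)).
  assert (Hl : 0 <= l <= 1).
  { unfold l; split.
    - apply Rlt_le, Rdiv_lt_0_compat; lra.
    - apply Rmult_le_reg_r with (x + d - z); [lra|].
      unfold Rdiv; rewrite Rmult_assoc, Rinv_l by lra; lra. }
  pose proof (Hlc z (x + d) l Hl) as Hx.
  pose proof (Hlc (x + d) z l Hl) as Hzd.
  replace (l * z + (1 - l) * (x + d)) with x in Hx by (unfold l; field; lra).
  replace (l * (x + d) + (1 - l) * z) with (z + d) in Hzd by (unfold l; field; lra).
  pose proof (Hs z); pose proof (Hs x); pose proof (Hs (x + d)); pose proof (Hs (z + d)).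
  destruct (Rle_or_lt (f z * f (x + d)) (f x * f (z + d))) as [|Hlt]; [assumption|].
  apply ln_increasing in Hlt; [|nra].
  rewrite !ln_mult in Hlt by assumption; lra.
Qed.

Definition unimodal_at (G : R -> R) (s0 : R) : Prop :=
  (forall x y, x < y <= s0 -> G x < G y) /\ (forall x y, s0 <= x < y -> G y < G x).

Lemma unimodal_at_of_derive_sign (G G' : R -> R) (s0 : R) :
  (forall s, is_derive G s (G' s)) ->
  (forall s, s < s0 -> 0 < G' s) -> (forall s, s0 < s -> G' s < 0) ->
  unimodal_at G s0.
Proof.
  intros Hd Hinc Hdec.
  assert (Hmvt : forall x y, x < y -> exists c, G y - G x = G' c * (y - x) /\ x < c < y).
  { intros x y Hxy; apply MVT_cor2; [exact Hxy|].
    intros c _; apply is_derive_Reals, Hd. }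
  split.
  - intros x y [Hxy Hy]; destruct (Hmvt x y Hxy) as [c [Hc Hcxy]].
    pose proof (Hinc c ltac:(lra)); nra.
  - intros x y [Hx Hxy]; destruct (Hmvt x y Hxy) as [c [Hc Hcxy]].
    pose proof (Hdec c ltac:(lra)); nra.
Qed.

Lemma unimodal_at_strictly_quasiconcave (G : R -> R) (s0 : R) :
  unimodal_at G s0 -> strictly_quasiconcave G.
Proof.
  intros [Hinc Hdec].
  assert (Hlt : forall x y l, x < y -> 0 < l < 1 ->
            Rmin (G x) (G y) < G (l * x + (1 - l) * y)).
  { intros x y l Hxy Hl.
    set (m := l * x + (1 - l) * y).
    assert (Hm : x < m < y) by (unfold m; nra).
    pose proof (Rmin_l (G x) (G y)); pose proof (Rmin_r (G x) (G y)).
    destruct (Rle_or_lt m s0).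
    - pose proof (Hinc x m ltac:(lra)); lra.
    - pose proof (Hdec m y ltac:(lra)); lra. }
  intros x y l Hxy Hl.
  destruct (Rtotal_order x y) as [H | [H | H]]; [auto | contradiction |].
  rewrite Rmin_comm.
  replace (l * x + (1 - l) * y) with ((1 - l) * y + (1 - (1 - l)) * x) by ring.
  apply Hlt; lra.
Qed.

Lemma unimodal_at_max (G : R -> R) (s0 : R) :
  unimodal_at G s0 -> forall s, G s <= G s0.
Proof.
  intros [Hinc Hdec] s.
  destruct (Rtotal_order s s0) as [H | [-> | H]].
  - left; apply Hinc; lra.
  - lra.
  - left; apply Hdec; lra.
Qed.

Lemma strictly_quasiconcave_comp_scale (G : R -> R) (a : R) :
  a <> 0 -> strictly_quasiconcave G -> strictly_quasiconcave (fun r => G (r * a)).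
Proof.
  intros Ha HG x y l Hxy Hl.
  replace ((l * x + (1 - l) * y) * a) with (l * (x * a) + (1 - l) * (y * a)) by ring.
  apply HG; [|exact Hl].
  intro E; apply Hxy, (Rmult_eq_reg_r a); assumption.
Qed.

Lemma attains_max_comp_scale (G : R -> R) (a : R) :
  a <> 0 -> attains_max G -> attains_max (fun r => G (r * a)).
Proof.
  intros Ha [s0 Hs0]; exists (s0 / a); intro r.
  replace (s0 / a * a) with s0 by (field; exact Ha); apply Hs0.
Qed.

Lemma sign_change_of_strictly_decreasing (k : R -> R) (a b : R) :
  continuity k -> (forall x y, x < y -> k y < k x) ->
  0 < k a -> k b < 0 ->
  exists s0, forall s, (s < s0 -> 0 < k s) /\ (s0 < s -> k s < 0).
Proof.
  intros Hc Hdec Ha Hb.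
  assert (Hab : a < b).
  { destruct (Rlt_or_le a b) as [|[Hba | ->]]; [assumption| |];
      [pose proof (Hdec b a Hba)|]; lra. }
  destruct (IVT_cor k a b Hc (Rlt_le _ _ Hab) ltac:(nra)) as [s0 [_ Hs0]].
  exists s0; intro s; split; intro Hs.
  - pose proof (Hdec s s0 Hs); lra.
  - pose proof (Hdec s0 s Hs); lra.
Qed.

Lemma Derive_of_is_derive (F f : R -> R) :
  (forall x, is_derive F x (f x)) -> forall x, Derive F x = f x.
Proof. intros HFd x; apply is_derive_unique, HFd. Qed.

Definition mills_ratio (F f : R -> R) (x : R) : R := (1 - F x) / f x.

Section LogConcaveCdf.

Variables F f : R -> R.
Hypothesis HF : is_C1_cdf_with_density F f.
Hypothesis Hs : full_support f.
Hypothesis Hlc : log_concave f.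

Let HFd : forall x, is_derive F x (f x) := proj1 HF.

Lemma is_derive_survival x : is_derive (fun z => 1 - F z) x (- f x).
Proof.
  replace (- f x) with (0 - f x) by ring.
  apply (is_derive_minus (fun _ => 1) F); [exact (is_derive_const 1 x) | apply HFd].
Qed.

Lemma survival_lim0 : is_lim (fun x => 1 - F x) p_infty 0.
Proof.
  replace (Finite 0) with (Finite (1 - 1)) by (f_equal; ring).
  apply is_lim_minus'; [apply is_lim_const | apply HF].
Qed.

Lemma cdf_le1 x : F x <= 1.
Proof.
  enough (0 <= 1 - F x) by lra.
  apply (nonneg_of_nonincreasing_lim0 _ _ x is_derive_survival); [|exact survival_lim0].
  intros z _; pose proof (Hs z); lra.
Qed.

Lemma mills_ratio_nonincreasing x y : x < y -> mills_ratio F f y <= mills_ratio F f x.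
Proof.
  intros Hxy; set (d := y - x).
  (* g vanishes at +oo and is nonincreasing on [y, +oo) by log-concavity of f. *)
  set (g := fun z => f y * (1 - F (z + - d)) - f x * (1 - F z)).
  assert (Hg : 0 <= g y).
  { apply (nonneg_of_nonincreasing_lim0 g (fun z => f x * f z - f y * f (z + - d))).
    - intro z; unfold g; auto_derive.
      + repeat split; eexists; apply HFd.
      + rewrite !(Derive_of_is_derive F f HFd); ring.
    - intros z Hz.
      pose proof (log_concave_shift_ratio f Hs Hlc x (z + - d) d
                    ltac:(unfold d; lra) ltac:(unfold d; lra)) as Hr.
      replace (x + d) with y in Hr by (unfold d; ring).
      replace (z + - d + d) with z in Hr by ring.
      lra.
    - unfold g.
      replace (Finite 0) with (Finite (f y * 0 - f x * 0)) by (f_equal; ring).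
      apply is_lim_minus'; apply (is_lim_scal_l _ _ p_infty 0); [|exact survival_lim0].
      apply (is_lim_comp_shift (fun u => 1 - F u)), survival_lim0. }
  unfold g in Hg; replace (y + - d) with x in Hg by (unfold d; ring).
  pose proof (Hs x); pose proof (Hs y).
  unfold mills_ratio; apply Rmult_le_reg_r with (f x * f y); [nra|].
  replace ((1 - F y) / f y * (f x * f y)) with (f x * (1 - F y)) by (field; lra).
  replace ((1 - F x) / f x * (f x * f y)) with (f y * (1 - F x)) by (field; lra).
  lra.
Qed.

Lemma mills_ratio_nonneg x : 0 <= mills_ratio F f x.
Proof.
  apply Rmult_le_pos; [pose proof (cdf_le1 x); lra |].
  apply Rlt_le, Rinv_0_lt_compat, Hs.
Qed.

Lemma continuity_mills_ratio : continuity (mills_ratio F f).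
Proof.
  intro x; apply (continuity_pt_div (fun z => 1 - F z) f).
  - apply (continuity_pt_minus (fun _ => 1) F); [apply continuity_pt_const; now intros |].
    apply derivable_continuous_pt; exists (f x); apply is_derive_Reals, HFd.
  - apply continuity_pt_filterlim, HF.
  - apply Rgt_not_eq, Hs.
Qed.

Lemma complier_payoff_unimodal (t gamma : R) :
  exists s0, unimodal_at (fun s => - gamma + s * (1 - F s) + t * F s) s0.
Proof.
  set (k := fun s => mills_ratio F f s - (s - t)).
  assert (Hk : continuity k).
  { intro x; apply (continuity_pt_minus (mills_ratio F f) (fun s => s - t)).
    - apply continuity_mills_ratio.
    - apply (continuity_pt_minus (fun s => s) (fun _ => t));
        [apply continuity_pt_id | apply continuity_pt_const; now intros]. }
  assert (Hdec : forall x y, x < y -> k y < k x).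
  { intros x y Hxy; unfold k; pose proof (mills_ratio_nonincreasing x y Hxy); lra. }
  destruct (sign_change_of_strictly_decreasing
              k (t - 1) (t + mills_ratio F f t + 1) Hk Hdec) as [s0 Hs0].
  { unfold k; pose proof (mills_ratio_nonneg (t - 1)); lra. }
  { unfold k; pose proof (mills_ratio_nonneg t).
    pose proof (mills_ratio_nonincreasing t (t + mills_ratio F f t + 1) ltac:(lra)); lra. }
  exists s0; apply (unimodal_at_of_derive_sign _ (fun s => f s * k s)).
  - intro s; auto_derive.
    + repeat split; eexists; apply HFd.
    + rewrite (Derive_of_is_derive F f HFd); unfold k, mills_ratio.
      field; apply Rgt_not_eq, Hs.
  - intros s Hs'; apply Rmult_lt_0_compat; [apply Hs | apply Hs0, Hs'].
  - intros s Hs'; pose proof (Hs s); pose proof (proj2 (Hs0 s) Hs'); nra.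
Qed.

End LogConcaveCdf.

Lemma V1_strictly_quasiconcave_attains_max (F f : R -> R) :
  is_C1_cdf_with_density F f -> full_support f -> log_concave f ->
  forall rh t gamma, rh <> 0 ->
  strictly_quasiconcave (V1 F rh t gamma) /\ attains_max (V1 F rh t gamma).
Proof.
  intros HF Hs Hlc rh t gamma Hrh.
  destruct (complier_payoff_unimodal F f HF Hs Hlc t gamma) as [s0 Hs0].
  set (G := fun s => - gamma + s * (1 - F s) + t * F s) in Hs0.
  change (V1 F rh t gamma) with (fun r => G (r * rh)).
  split.
  - exact (strictly_quasiconcave_comp_scale G rh Hrh
             (unimodal_at_strictly_quasiconcave G s0 Hs0)).
  - exact (attains_max_comp_scale G rh Hrh (ex_intro _ s0 (unimodal_at_max G s0 Hs0))).
Qed.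

Definition reflected_cdf (F : R -> R) (x : R) : R := 1 - F (- x).

Lemma reflected_cdf_is_C1_cdf (F f : R -> R) :
  is_C1_cdf_with_density F f ->
  is_C1_cdf_with_density (reflected_cdf F) (fun x => f (- x)).
Proof.
  intros [HFd [Hfc [Hm Hp]]]; unfold reflected_cdf; split; [|split; [|split]].
  - intro x; auto_derive.
    + eexists; apply HFd.
    + rewrite (Derive_of_is_derive F f HFd); ring.
  - intro x; apply (continuous_comp (fun z => - z) f); [|apply Hfc].
    exact (continuous_opp (fun z : R => z) x (continuous_id x)).
  - replace (Finite 0) with (Finite (1 - 1)) by (f_equal; ring).
    apply is_lim_minus'; [apply is_lim_const | apply (is_lim_comp_opp F), Hp].
  - replace (Finite 1) with (Finite (1 - 0)) by (f_equal; ring).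
    apply is_lim_minus'; [apply is_lim_const | apply (is_lim_comp_opp F), Hm].
Qed.

Lemma full_support_reflect (f : R -> R) : full_support f -> full_support (fun x => f (- x)).
Proof. intros Hs x; apply Hs. Qed.

Lemma log_concave_reflect (f : R -> R) : log_concave f -> log_concave (fun x => f (- x)).
Proof.
  intros Hlc x y l Hl.
  replace (- (l * x + (1 - l) * y)) with (l * - x + (1 - l) * - y) by ring.
  apply Hlc, Hl.
Qed.

Lemma V0_eq_V1_reflected (F : R -> R) (rh t : R) :
  V0 F rh t = V1 (reflected_cdf F) (- rh) (- t) (- t).
Proof.
  apply functional_extensionality; intro r; unfold V0, V1, reflected_cdf.
  replace (- (r * - rh)) with (r * rh) by ring; ring.
Qed.

Theorem proposition5 (F f : R -> R)
  (HF : is_C1_cdf_with_density F f)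
  (Hsupp : full_support f)
  (Hlc : log_concave f)
  (d1 d0 phi t : R)
  (Hd1 : 0 <= d1 <= 1) (Hd0 : 0 <= d0 <= 1)
  (Hphi : / 2 < phi <= 1)
  (Ht : 0 <= t) :
  (~ is_null d1 d0 phi ->
     forall (gamma : R) (beta : bool),
       strictly_quasiconcave (Vbeta F (rho d1 d0 phi) t gamma beta) /\
       attains_max (Vbeta F (rho d1 d0 phi) t gamma beta)) /\
  (is_null d1 d0 phi ->
     forall gamma r r' : R,
       payoff F (rho d1 d0 phi) t gamma r = payoff F (rho d1 d0 phi) t gamma r').
Proof.
  unfold is_null; split.
  - intros Hrho gamma [|]; unfold Vbeta.
    + exact (V1_strictly_quasiconcave_attains_max F f HF Hsupp Hlc _ t gamma Hrho).
    + rewrite V0_eq_V1_reflected.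
      apply (V1_strictly_quasiconcave_attains_max _ (fun x => f (- x))).
      * exact (reflected_cdf_is_C1_cdf F f HF).
      * exact (full_support_reflect f Hsupp).
      * exact (log_concave_reflect f Hlc).
      * intro E; apply Hrho; lra.
  - intros Hrho gamma r r'; unfold payoff, V1, V0.
    rewrite Hrho, !Rmult_0_r.
    destruct (Rle_dec gamma 0); reflexivity.
Qed.
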